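(* Assume the setting in the context (deterministic $\Phi$ with $\operatorname{rank}(\widehat\Phi_1)=k$). Then for $i=1,\dots,k$, $$\sin\angle(\mathcal R(Q),\mathcal R(u_i))\le\frac{\delta_i^{2q+2}\|\widehat\Phi_2\widehat\Phi_1^\dagger\|_2}{\sqrt{1+\gamma^{4q+4}\|\widehat\Phi_2\widehat\Phi_1^\dagger\|_2^2}},\qquad \sin\angle(\mathcal R(P),\mathcal R(v_i))\le\frac{\delta_i^{2q+1}\|\widehat\Phi_2\widehat\Phi_1^\dagger\|_2}{\sqrt{1+\gamma^{4q+2}\|\widehat\Phi_2\widehat\Phi_1^\dagger\|_2^2}},$$ where $\angle(\mathcal X,\mathrm{span}\{x\})$ denotes the angle between the unit vector $x$ and the subspace $\mathcal X$, i.e. $\sin\angle=\|(I-\Pi_{\mathcal X})x\|_2$ with $\Pi_{\mathcal X}$ the orthogonal projector onto $\mathcal X$.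
   Context: Let $A\in\mathbb R^{m\times n}$ with $m\ge n$ have full SVD $A=U\Sigma V^T$, with singular values $\sigma_1\ge\sigma_2\ge\dots\ge\sigma_n\ge 0$. Fix an integer $k\ge1$ with $\sigma_k>0$ (the paper regards $A$ as having numerical rank $k$, i.e. $\sigma_k$ well separated from $\sigma_{k+1}$). Write $U=[U_k\ U_\perp]$ with $U_k\in\mathbb R^{m\times k}$ the first $k$ left singular vectors $u_1,\dots,u_k$, $U_\perp\in\mathbb R^{m\times(m-k)}$ the rest; $V=[V_k\ V_\perp]$ with $V_k\in\mathbb R^{n\times k}$ the first $k$ right singular vectors $v_1,\dots,v_k$; $\Sigma_k=\mathrm{diag}(\sigma_1,\dots,\sigma_k)$ and $\Sigma_\perp$ the remaining diagonal block of $\Sigma$ containing $\sigma_{k+1},\dots,\sigma_n$ (so $\|\Sigma_\perp\|_2=\sigma_{k+1}$, $\|\Sigma_\perp\|_F=(\sum_{i>k}\sigma_i^2)^{1/2}$). The notation $\|\cdot\|_{2,F}$ means the statement holds for both the spectral and Frobenius norm. Let $p\ge1$ be an oversampling integer, $d=k+p<n$, and $q\ge0$ an integer (power-iteration parameter). RU-QLP (Randomized Unpivoted QLP): given $\Phi\in\mathbb R^{m\times d}$, let $\bar P\in\mathbb R^{n\times d}$ have orthonormal columns spanning the range of $(A^TA)^qA^T\Phi$ (assumed of rank $d$); compute the thin unpivoted QR factorization $A\bar P=QR$ with $Q\in\mathbb R^{m\times d}$ having orthonormal columns and $R\in\mathbb R^{d\times d}$ upper triangular; compute the thin unpivoted QR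 factorization $R^T=\widetilde P\widetilde R$; set $P=\bar P\widetilde P\in\mathbb R^{n\times d}$ and $L=\widetilde R^T$ (lower triangular), giving $\hat A=QLP^T$. Partition $R=\begin{bmatrix}R_{11}&R_{12}\\0&R_{22}\end{bmatrix}$ and $L=\begin{bmatrix}L_{11}&0\\L_{21}&L_{22}\end{bmatrix}$ with $R_{11},L_{11}\in\mathbb R^{k\times k}$. Define $\widehat\Phi_1=U_k^T\Phi\in\mathbb R^{k\times d}$ and $\widehat\Phi_2=U_\perp^T\Phi\in\mathbb R^{(m-k)\times d}$, assume $\widehat\Phi_1$ has rank $k$, and let $\dagger$ denote the Moore–Penrose inverse. Set $\delta_i=\sigma_{k+1}/\sigma_i$ for $i=1,\dots,k$ and $\gamma=\sigma_n/\sigma_1$. *)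

From mathcomp Require Import all_boot all_order all_algebra.
From mathcomp Require Import boolp classical_sets reals.
Set Implicit Arguments. Unset Strict Implicit. Unset Printing Implicit Defensive.
Import Order.TTheory GRing.Theory Num.Theory.
Local Open Scope ring_scope.
Local Open Scope classical_set_scope.

Section Defs.
Variable R : realType.

Definition vnorm2 {n : nat} (x : 'cV[R]_n) : R :=
  Num.sqrt (\sum_(i < n) x i 0 ^+ 2).

Definition snorm2 {m n : nat} (A : 'M[R]_(m, n)) : R :=
  sup [set vnorm2 (A *m x) | x in [set x : 'cV[R]_n | vnorm2 x <= 1]].

Definition is_pinv {m n : nat} (A : 'M[R]_(m, n)) (X : 'M[R]_(n, m)) : Prop :=
  [/\ A *m X *m A = A, X *m A *m X = X,
      (A *m X)^T = A *m X & (X *m A)^T = X *m A].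

(* Pi is the orthogonal projector onto the column space R(X) *)
Definition is_orth_proj {m d : nat} (X : 'M[R]_(m, d)) (Pi : 'M[R]_m) : Prop :=
  [/\ Pi^T = Pi, Pi *m Pi = Pi & (Pi^T == X^T)%MS].

(* sin of the angle between the subspace with orthogonal projector Pi and
   span{x}, for a unit vector x: ||(I - Pi) x||_2 *)
Definition sin_angle {m : nat} (Pi : 'M[R]_m) (x : 'cV[R]_m) : R :=
  vnorm2 ((1%:M - Pi) *m x).

Definition diag_rect (m n : nat) (s : nat -> R) : 'M[R]_(m, n) :=
  \matrix_(i < m, j < n) (if (i : nat) == j then s j else 0).

Definition lcols {r m k : nat} (hkm : (k <= m)%N) (U : 'M[R]_(r, m))
  : 'M[R]_(r, k) := lsubmx (castmx (erefl r, esym (subnKC hkm)) U).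
Definition rcols {r m k : nat} (hkm : (k <= m)%N) (U : 'M[R]_(r, m))
  : 'M[R]_(r, m - k) := rsubmx (castmx (erefl r, esym (subnKC hkm)) U).

Definition upper_tri {d : nat} (M : 'M[R]_d) : Prop :=
  forall i j : 'I_d, (j < i)%N -> M i j = 0.

End Defs.

From mathcomp Require Import all_boot all_order all_algebra.
From mathcomp Require Import boolp classical_sets reals.
From mathcomp Require Import ring lra.
Import Order.TTheory GRing.Theory Num.Theory.
Local Open Scope ring_scope.
Set Implicit Arguments. Unset Strict Implicit.

(* Let c := Phi1dag e_i and y := U^T Phi c.  As Phi1 := U_k^T Phi has full row
   rank, Phi1 Phi1dag = I, so the first k coordinates of y are e_i and the
   remaining ones have norm at most eta.  The vector (A^T A)^q A^T Phi c =
   V Sigma^(2q+1) y lies in R(Pbar) = R(P), and its image under A,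
   U Sigma^(2q+2) y, lies in R(A Pbar) <= R(Q).  After rescaling, each is u_i
   (resp. v_i) plus an orthogonal perturbation z of norm at most
   delta_i^(2q+2) eta (resp. delta_i^(2q+1) eta), since sigma_j <= sigma_(k+1)
   for j > k.  A projector fixing u + z with z orthogonal to the unit vector u
   satisfies |(I - Pi) u|^2 <= |z|^2 / (1 + |z|^2), and gamma <= delta_i turns
   this into the stated bound. *)

Section InnerProduct.
Variable R : realType.

Definition dot {n} (x y : 'cV[R]_n) : R := (x^T *m y) 0 0.

Lemma dotE n (x y : 'cV[R]_n) : dot x y = \sum_j x j 0 * y j 0.
Proof. by rewrite /dot mxE; apply: eq_bigr => j _; rewrite mxE. Qed.

Lemma dotC n (x y : 'cV[R]_n) : dot x y = dot y x.
Proof. by rewrite !dotE; apply: eq_bigr => j _; rewrite mulrC. Qed.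

Lemma dot_ge0 n (x : 'cV[R]_n) : 0 <= dot x x.
Proof. by rewrite dotE; apply: sumr_ge0 => j _; rewrite -expr2 sqr_ge0. Qed.

Lemma dotBl n (x y z : 'cV[R]_n) : dot (x - y) z = dot x z - dot y z.
Proof. by rewrite !dotE -sumrB; apply: eq_bigr => j _; rewrite !mxE mulrBl. Qed.

Lemma dotZl n a (x z : 'cV[R]_n) : dot (a *: x) z = a * dot x z.
Proof. by rewrite !dotE mulr_sumr; apply: eq_bigr => j _; rewrite mxE mulrA. Qed.

Lemma dotBr n (x y z : 'cV[R]_n) : dot z (x - y) = dot z x - dot z y.
Proof. by rewrite dotC dotBl !(dotC z). Qed.

Lemma dotZr n a (x z : 'cV[R]_n) : dot z (a *: x) = a * dot z x.
Proof. by rewrite dotC dotZl dotC. Qed.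

Lemma dot_mulmxl n p (M : 'M[R]_(n, p)) x y : dot (M *m x) y = dot x (M^T *m y).
Proof. by rewrite /dot trmx_mul mulmxA. Qed.

Lemma dot_orth_mulmx n p (W : 'M[R]_(n, p)) x y :
  W^T *m W = 1%:M -> dot (W *m x) (W *m y) = dot x y.
Proof. by move=> hW; rewrite dot_mulmxl mulmxA hW mul1mx. Qed.

Lemma dot_delta n (i : 'I_n) (x : 'cV[R]_n) : dot (delta_mx i 0) x = x i 0.
Proof.
rewrite dotE (bigD1 i) //= big1 => [|j /negbTE hj]; last by rewrite mxE hj mul0r.
by rewrite mxE !eqxx mul1r addr0.
Qed.

Lemma vnorm2E n (x : 'cV[R]_n) : vnorm2 x = Num.sqrt (dot x x).
Proof. by rewrite /vnorm2 dotE; congr Num.sqrt; apply: eq_bigr => j _; rewrite expr2. Qed.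

Lemma vnorm2_ge0 n (x : 'cV[R]_n) : 0 <= vnorm2 x.
Proof. by rewrite vnorm2E sqrtr_ge0. Qed.

Lemma sqr_vnorm2 n (x : 'cV[R]_n) : vnorm2 x ^+ 2 = dot x x.
Proof. by rewrite vnorm2E sqr_sqrtr ?dot_ge0. Qed.

Lemma vnorm2_delta n (i : 'I_n) : vnorm2 (delta_mx i 0 : 'cV[R]_n) = 1.
Proof. by rewrite vnorm2E dot_delta mxE !eqxx sqrtr1. Qed.

End InnerProduct.

Section ProjectorAngle.
Variables (R : realType) (m : nat) (Pi : 'M[R]_m).
Hypotheses (Pi_sym : Pi^T = Pi) (Pi_idem : Pi *m Pi = Pi).

Lemma orth_complement_sqr (x : 'cV[R]_m) :
  dot ((1%:M - Pi) *m x) ((1%:M - Pi) *m x) = dot x x - dot x (Pi *m x).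
Proof.
have sym : (1%:M - Pi)^T = 1%:M - Pi by rewrite linearB /= trmx1 Pi_sym.
rewrite dot_mulmxl mulmxA sym mulmxBl mul1mx mulmxBr mulmx1 Pi_idem subrr subr0.
by rewrite mulmxBl mul1mx dotBr.
Qed.

(* If Pi fixes u + z with z orthogonal to the unit vector u, then (I - Pi) u
   = (I - Pi) v for v := u - (u + z) / (1 + |z|^2), whose squared
   norm is |z|^2 / (1 + |z|^2). *)
Lemma sin_angle_sqr_le (u z : 'cV[R]_m) :
  dot u u = 1 -> dot u z = 0 -> Pi *m (u + z) = u + z ->
  sin_angle Pi u ^+ 2 <= dot z z / (1 + dot z z).
Proof.
move=> huu huz hfix; rewrite /sin_angle sqr_vnorm2.
set t := dot z z; have t0 : 0 <= t := dot_ge0 z.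
set c := (1 + t)^-1; set v := (1 - c) *: u - c *: z.
have -> : (1%:M - Pi) *m u = (1%:M - Pi) *m v.
  apply/eqP; rewrite -subr_eq0 -mulmxBr.
  have -> : u - v = c *: (u + z) by apply/matrixP => a b; rewrite !mxE; ring.
  by rewrite -scalemxAr mulmxBl mul1mx hfix subrr scaler0.
rewrite orth_complement_sqr.
have hPv : 0 <= dot v (Pi *m v).
  by rewrite -Pi_idem -{1}Pi_sym -mulmxA -dot_mulmxl dot_ge0.
have -> : dot v v = t / (1 + t).
  rewrite /v !(dotBl, dotBr, dotZl, dotZr) huu (dotC z u) huz -/t /c.
  by field; rewrite gt_eqF // ltr_pwDl.
by rewrite gerBl.
Qed.

End ProjectorAngle.

Section ColumnAngle.
Variable R : realType.

Lemma le_div_sqrt1D (x t b G : R) : 0 <= x -> 0 <= t -> 0 <= b -> 0 <= G ->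
  G <= b ^+ 2 -> t <= b ^+ 2 -> x ^+ 2 <= t / (1 + t) ->
  x <= b / Num.sqrt (1 + G).
Proof.
move=> x0 t0 b0 G0 Gb tb hx.
have G1 : 0 < 1 + G by apply: ltr_pwDl.
have hbG : 0 <= b / Num.sqrt (1 + G) by rewrite divr_ge0 ?sqrtr_ge0.
rewrite -ler_sqr ?nnegrE // expr_div_n (sqr_sqrtr (ltW G1)).
apply: le_trans hx _; rewrite ler_pdivrMr ?ltr_pwDl // mulrAC ler_pdivlMr //.
have : t * G <= t * b ^+ 2 by apply: ler_wpM2l.
by move: tb; nra.
Qed.

Lemma sin_angle_col_le mm kk (W Pi : 'M[R]_mm) (i0 : 'I_mm) (d : 'cV[R]_mm)
    (a b G : R) :
  W^T *m W = 1%:M -> Pi^T = Pi -> Pi *m Pi = Pi -> Pi *m (W *m d) = W *m d ->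
  (i0 < kk)%N -> 0 < a -> d i0 0 = a ->
  (forall j : 'I_mm, j != i0 -> (j < kk)%N -> d j 0 = 0) ->
  0 <= b -> 0 <= G -> G <= b ^+ 2 ->
  \sum_(j < mm | (kk <= j)%N) d j 0 ^+ 2 <= (a * b) ^+ 2 ->
  sin_angle Pi (col i0 W) <= b / Num.sqrt (1 + G).
Proof.
move=> hW Pi_sym Pi_idem hfix hik a0 hdi hdl b0 G0 Gb htail.
have a_neq0 : a != 0 by rewrite gt_eqF.
set e : 'cV[R]_mm := delta_mx i0 0.
set z := a^-1 *: d - e.
have hz j : z j 0 = if (kk <= j)%N then a^-1 * d j 0 else 0.
  rewrite !mxE eqxx andbT; case: (eqVneq j i0) => [->|hj].
    by rewrite leqNgt hik hdi mulVf // subrr.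
  by rewrite subr0; case: leqP => // /(hdl _ hj) ->; rewrite mulr0.
have huu : dot (W *m e) (W *m e) = 1 by rewrite dot_orth_mulmx // dot_delta mxE !eqxx.
have huz : dot (W *m e) (W *m z) = 0.
  by rewrite dot_orth_mulmx // dot_delta hz leqNgt hik.
have hez : Pi *m (W *m e + W *m z) = W *m e + W *m z.
  by rewrite -mulmxDr addrC subrK -!scalemxAr hfix.
have ht : dot (W *m z) (W *m z) <= b ^+ 2.
  rewrite dot_orth_mulmx // dotE (bigID (fun j : 'I_mm => (kk <= j)%N)) /=.
  rewrite [X in _ + X]big1 => [|j /negbTE hj]; last by rewrite hz hj mul0r.
  rewrite addr0 -(ler_pM2l (exprn_gt0 2 a0)) -exprMn mulr_sumr.
  rewrite (eq_bigr (fun j : 'I_mm => d j 0 ^+ 2)) // => j hj.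
  by rewrite hz hj; field.
rewrite colE; apply: (le_div_sqrt1D (vnorm2_ge0 _) (dot_ge0 _) b0 G0 Gb ht).
exact: (sin_angle_sqr_le Pi_sym Pi_idem huu huz hez).
Qed.

End ColumnAngle.

Section SpectralNorm.
Variable R : realType.

Lemma normr_coord_le1 n (x : 'cV[R]_n) j : vnorm2 x <= 1 -> `|x j 0| <= 1.
Proof.
move=> hx; rewrite -ler_sqr ?nnegrE // real_normK ?num_real // expr1n.
apply: le_trans (_ : dot x x <= 1).
  by rewrite dotE (bigD1 j) //= -expr2 lerDl sumr_ge0 // => l _; rewrite -expr2 sqr_ge0.
by rewrite -sqr_vnorm2 -(expr1n _ 2) ler_sqr ?nnegrE ?vnorm2_ge0.
Qed.

Lemma snorm2_has_ubound a b (M : 'M[R]_(a, b)) :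
  has_ubound [set vnorm2 (M *m x) | x in [set x : 'cV[R]_b | vnorm2 x <= 1]].
Proof.
exists (Num.sqrt (\sum_(i < a) (\sum_(l < b) `|M i l|) ^+ 2)).
move=> _ [x /= hx <-]; rewrite vnorm2E ler_sqrt ?sumr_ge0 // => [|i _]; last first.
  exact: sqr_ge0.
rewrite dotE; apply: ler_sum => i _; rewrite -expr2 -real_normK ?num_real //.
rewrite ler_sqr ?nnegrE ?sumr_ge0 // mxE; apply: le_trans (ler_norm_sum _ _ _) _.
apply: ler_sum => l _; rewrite normrM ler_piMr //.
exact: normr_coord_le1.
Qed.

Lemma vnorm2_mulmx_le_snorm2 a b (M : 'M[R]_(a, b)) x :
  vnorm2 x <= 1 -> vnorm2 (M *m x) <= snorm2 M.
Proof. by move=> hx; apply: ub_le_sup (snorm2_has_ubound M) _ _; exists x. Qed.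

Lemma snorm2_ge0 a b (M : 'M[R]_(a, b)) : 0 <= snorm2 M.
Proof.
apply: le_trans (vnorm2_mulmx_le_snorm2 M (x := 0) _); first exact: vnorm2_ge0.
by rewrite vnorm2E dotE big1 ?sqrtr0 // => j _; rewrite mxE mul0r.
Qed.

End SpectralNorm.

Section DiagRect.
Variable R : realType.

Lemma eq_diag_rect a b (f g : nat -> R) :
  (forall j, (j < a)%N -> (j < b)%N -> f j = g j) ->
  diag_rect a b f = diag_rect a b g.
Proof. by move=> h; apply/matrixP => i j; rewrite !mxE; case: eqP => // e; rewrite h // -e. Qed.

Lemma trmx_diag_rect a b (f : nat -> R) : (diag_rect a b f)^T = diag_rect b a f.
Proof. by apply/matrixP => i j; rewrite !mxE eq_sym; case: eqP => // e; rewrite e. Qed.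

Lemma mulmx_diag_rect a b c (f g : nat -> R) :
  diag_rect a b f *m diag_rect b c g =
  diag_rect a c (fun j => if (j < b)%N then f j * g j else 0).
Proof.
apply/matrixP => i j; rewrite !mxE.
case: (ltnP i b) => hib.
  rewrite (bigD1 (Ordinal hib)) //= big1 => [|l hl]; last first.
    rewrite !mxE; case: eqP => [e|]; last by rewrite mul0r.
    by move: hl; rewrite -val_eqE /= -e eqxx.
  rewrite !mxE eqxx addr0; case: eqP => [e|]; last by rewrite mulr0.
  by rewrite -e hib e.
rewrite big1 => [|l _]; last first.
  rewrite !mxE; case: eqP => [e|]; last by rewrite mul0r.
  by move: (ltn_ord l); rewrite -e ltnNge hib.
by case: eqP => // e; rewrite -e ltnNge hib.
Qed.

Lemma diag_rect1 a : diag_rect a a (fun=> 1 : R) = 1%:M.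
Proof. by apply/matrixP => i j; rewrite !mxE -val_eqE; case: eqP. Qed.

Lemma expr_diag_rect a (f : nat -> R) e :
  (diag_rect a a f) ^+ e = diag_rect a a (fun j => f j ^+ e).
Proof.
elim: e => [|e IH]; first by rewrite expr0 -idmxE -diag_rect1; apply: eq_diag_rect.
by rewrite exprS IH -mulmxE mulmx_diag_rect; apply: eq_diag_rect => j hj _; rewrite hj exprS.
Qed.

Lemma diag_rect_mulmx a b (hab : (a <= b)%N) (f : nat -> R) (y : 'cV[R]_b) (j : 'I_a) :
  (diag_rect a b f *m y) j 0 = f j * y (widen_ord hab j) 0.
Proof.
rewrite mxE (bigD1 (widen_ord hab j)) //= big1 => [|l hl].
  by rewrite !mxE eqxx addr0.
rewrite !mxE; case: eqP => [e|]; last by rewrite mul0r.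
by move: hl; rewrite -val_eqE /= -e eqxx.
Qed.

Lemma diag_rect_mulmx_sq a (f : nat -> R) (y : 'cV[R]_a) (j : 'I_a) :
  (diag_rect a a f *m y) j 0 = f j * y j 0.
Proof. by rewrite (diag_rect_mulmx (leqnn a)); congr (_ * y _ _); apply: val_inj. Qed.

End DiagRect.

Section SVDPowers.
Variables (R : realType) (m n : nat) (s : nat -> R).
Variables (A : 'M[R]_(m, n)) (U : 'M[R]_m) (V : 'M[R]_n).
Hypotheses (hnm : (n <= m)%N) (hU : U^T *m U = 1%:M) (hV : V^T *m V = 1%:M).
Hypothesis hSVD : A = U *m diag_rect m n s *m V^T.

Lemma expr_orth_conj (X : 'M[R]_n) e : (V *m X *m V^T) ^+ e = V *m X ^+ e *m V^T.
Proof.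
elim: e => [|e IH]; first by rewrite !expr0 -idmxE mulmx1 (mulmx1C hV).
rewrite !exprS IH -!mulmxE !mulmxA -(mulmxA (V *m X)) hV mulmx1.
by rewrite -!mulmxA.
Qed.

Lemma svd_trmx : A^T = V *m diag_rect n m s *m U^T.
Proof. by rewrite hSVD !trmx_mul trmxK trmx_diag_rect mulmxA. Qed.

Lemma svd_gram_expr e :
  (A^T *m A) ^+ e = V *m diag_rect n n (fun j => s j ^+ (2 * e)) *m V^T.
Proof.
have -> : A^T *m A = V *m diag_rect n n (fun j => s j ^+ 2) *m V^T.
  rewrite svd_trmx hSVD !mulmxA -(mulmxA (V *m _) U^T U) hU mulmx1.
  rewrite -(mulmxA V) mulmx_diag_rect; congr (_ *m _ *m _).
  by apply: eq_diag_rect => j hj _; rewrite (leq_trans hj hnm) expr2.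
rewrite expr_orth_conj expr_diag_rect; congr (_ *m _ *m _).
by apply: eq_diag_rect => j _ _; rewrite exprM.
Qed.

Lemma svd_power_iter e :
  (A^T *m A) ^+ e *m A^T = V *m diag_rect n m (fun j => s j ^+ (2 * e + 1)) *m U^T.
Proof.
rewrite svd_gram_expr svd_trmx !mulmxA -(mulmxA (V *m _) V^T V) hV mulmx1.
rewrite -(mulmxA V) mulmx_diag_rect; congr (_ *m _ *m _).
by apply: eq_diag_rect => j hj _; rewrite hj addn1 exprSr.
Qed.

Lemma svd_power_iter_image e :
  A *m ((A^T *m A) ^+ e *m A^T) =
  U *m diag_rect m m (fun j => if (j < n)%N then s j ^+ (2 * e + 2) else 0) *m U^T.
Proof.
rewrite svd_power_iter hSVD !mulmxA -(mulmxA (U *m _) V^T V) hV mulmx1.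
rewrite -(mulmxA U) mulmx_diag_rect; congr (_ *m _ *m _).
apply: eq_diag_rect => j _ _; case: ifP => // _.
by rewrite -exprS addn1 addn2.
Qed.

End SVDPowers.

Lemma big_cast_ord (R : Type) (idx : R) (op : Monoid.com_law idx) m m' (e : m' = m)
    (P : pred 'I_m) (F : 'I_m -> R) :
  \big[op/idx]_(j < m | P j) F j = \big[op/idx]_(j < m' | P (cast_ord e j)) F (cast_ord e j).
Proof. by subst m; apply: eq_big => j; rewrite cast_ord_id. Qed.

Section ColumnBlocks.
Variables (R : realType) (r m k : nat) (hkm : (k <= m)%N) (U : 'M[R]_(r, m)).

Lemma col_lcols (i : 'I_k) : col i (lcols hkm U) = col (widen_ord hkm i) U.
Proof. by apply/matrixP => a b; rewrite !(mxE, castmxE); congr (U _ _); apply: val_inj. Qed.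

Lemma lcols_trmx_mulmx p (X : 'M[R]_(r, p)) b c :
  ((lcols hkm U)^T *m X) b c = (U^T *m X) (widen_ord hkm b) c.
Proof.
rewrite !mxE; apply: eq_bigr => a _; rewrite !(mxE, castmxE).
by congr (U _ _ * _); apply: val_inj.
Qed.

Lemma rcols_trmx_mulmx p (X : 'M[R]_(r, p)) b c :
  ((rcols hkm U)^T *m X) b c = (U^T *m X) (cast_ord (subnKC hkm) (rshift k b)) c.
Proof.
rewrite !mxE; apply: eq_bigr => a _; rewrite !(mxE, castmxE).
by congr (U _ _ * _); apply: val_inj.
Qed.

Lemma dot_rcols_trmx (x : 'cV[R]_r) :
  dot ((rcols hkm U)^T *m x) ((rcols hkm U)^T *m x) =
  \sum_(j < m | (k <= j)%N) (U^T *m x) j 0 ^+ 2.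
Proof.
rewrite (big_cast_ord _ (subnKC hkm)) big_split_ord /= big_pred0 => [|j]; last first.
  by rewrite leqNgt ltn_ord.
rewrite add0r dotE; apply: eq_big => [j|j _]; first by rewrite leq_addr.
by rewrite rcols_trmx_mulmx expr2.
Qed.

End ColumnBlocks.

Section ProjectionsAndBounds.
Variable R : realType.

Lemma orth_proj_mulmx_fix m d p (X : 'M[R]_(m, d)) (Pi : 'M[R]_m) (Y : 'M[R]_(d, p)) :
  is_orth_proj X Pi -> Pi *m (X *m Y) = X *m Y.
Proof.
case=> _ Pi_idem /andP[_ hX].
have /submxP[D hD] : ((X *m Y)^T <= Pi^T)%MS.
  by apply: submx_trans hX; rewrite trmx_mul submxMl.
have -> : X *m Y = Pi *m D^T by rewrite -[X *m Y]trmxK hD trmx_mul trmxK.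
by rewrite mulmxA Pi_idem.
Qed.

Lemma pinv_row_full_rank r c (M : 'M[R]_(r, c)) (X : 'M[R]_(c, r)) :
  \rank M = r -> is_pinv M X -> M *m X = 1%:M.
Proof.
move=> rkM [hMXM _ _ _]; have free_M : row_free M by rewrite /row_free rkM.
by apply: (row_free_inj free_M); rewrite mul1mx.
Qed.

Lemma sum_sqr_mul_le (I : finType) (P : pred I) (f g : I -> R) c :
  (forall j, P j -> `|f j| <= c) ->
  \sum_(j | P j) (f j * g j) ^+ 2 <= c ^+ 2 * \sum_(j | P j) g j ^+ 2.
Proof.
move=> hf; rewrite mulr_sumr; apply: ler_sum => j /hf hj.
rewrite exprMn ler_wpM2r ?sqr_ge0 // -real_normK ?num_real //.
by rewrite ler_sqr ?nnegrE // (le_trans _ hj).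
Qed.

Lemma nonincreasing_le (s : nat -> R) n :
  (forall j, (j.+1 < n)%N -> s j.+1 <= s j) ->
  forall j l, (j <= l)%N -> (l < n)%N -> s l <= s j.
Proof.
move=> hs j l /subnK <-; elim: (l - j)%N => [|e IH] hl //.
by rewrite addSn; apply: le_trans (hs _ hl) (IH (ltnW hl)).
Qed.

End ProjectionsAndBounds.

Section RandomizedQLPAngles.
Variables (R : realType) (m n k d q : nat) (hkm : (k <= m)%N) (hkn : (k <= n)%N).
Hypotheses (hnm : (n <= m)%N) (hkn_lt : (k < n)%N).
Variables (A : 'M[R]_(m, n)) (U : 'M[R]_m) (V : 'M[R]_n) (s : nat -> R).
Hypotheses (hU : U^T *m U = 1%:M) (hV : V^T *m V = 1%:M).
Hypotheses (hs_nonneg : forall j, (j < n)%N -> 0 <= s j)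
           (hs_mono : forall j, (j.+1 < n)%N -> s j.+1 <= s j)
           (hsk : 0 < s k.-1) (hSVD : A = U *m diag_rect m n s *m V^T).
Variables (Phi Q : 'M[R]_(m, d)) (Pbar : 'M[R]_(n, d)) (Rm Pt : 'M[R]_d).
Hypotheses (hPbar_range : (Pbar^T == ((A^T *m A) ^+ q *m A^T *m Phi)^T)%MS)
           (hQR : A *m Pbar = Q *m Rm) (hPt_on : Pt^T *m Pt = 1%:M).
Variable Phi1dag : 'M[R]_(d, k).
Hypotheses (hrank1 : \rank ((lcols hkm U)^T *m Phi) = k)
           (hdag : is_pinv ((lcols hkm U)^T *m Phi) Phi1dag).
Variables (PiQ : 'M[R]_m) (PiP : 'M[R]_n).
Hypotheses (hPiQ : is_orth_proj Q PiQ) (hPiP : is_orth_proj (Pbar *m Pt) PiP).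
Variable i : 'I_k.

Local Notation eta := (snorm2 ((rcols hkm U)^T *m Phi *m Phi1dag)).
Local Notation gamma := (s n.-1 / s 0).
Local Notation delta := (s k / s i).
Local Notation e_i := (delta_mx i 0 : 'cV[R]_k).
Local Notation y := (U^T *m (Phi *m (Phi1dag *m e_i))).

Let s_le j l : (j <= l)%N -> (l < n)%N -> s l <= s j.
Proof. exact: nonincreasing_le. Qed.

Lemma singular_value_gt0 : 0 < s i.
Proof.
apply: lt_le_trans hsk (s_le _ _); first by rewrite -ltnS prednK // (leq_ltn_trans _ (ltn_ord i)).
exact: leq_ltn_trans (leq_pred k) hkn_lt.
Qed.

Lemma normr_singular_value_expr_le e j : (k <= j)%N -> (j < n)%N -> `|s j ^+ e| <= s k ^+ e.
Proof.
move=> hkj hjn; rewrite ger0_norm ?exprn_ge0 ?hs_nonneg //.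
by rewrite lerXn2r ?nnegrE ?hs_nonneg ?s_le.
Qed.

Lemma singular_value_mul_delta : s i * delta = s k.
Proof. by rewrite mulrC divfK // gt_eqF // singular_value_gt0. Qed.

Lemma delta_ge0 : 0 <= delta.
Proof. by rewrite divr_ge0 ?(hs_nonneg hkn_lt) ?(ltW singular_value_gt0). Qed.

Let last_lt_n : (n.-1 < n)%N.
Proof. by rewrite prednK // (leq_ltn_trans _ hkn_lt). Qed.

Let s_last_le_k : s n.-1 <= s k.
Proof. by apply: s_le last_lt_n; rewrite -ltnS prednK // (leq_ltn_trans _ hkn_lt). Qed.

Let s_i_le_0 : s i <= s 0.
Proof. exact: s_le (leq0n _) (ltn_trans (ltn_ord i) hkn_lt). Qed.

Lemma gamma_ge0 : 0 <= gamma.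
Proof. by rewrite divr_ge0 ?(hs_nonneg last_lt_n) ?(le_trans (ltW singular_value_gt0) s_i_le_0). Qed.

Lemma gamma_le_delta : gamma <= delta.
Proof.
have si0 := singular_value_gt0.
rewrite ler_pdivrMr ?(lt_le_trans si0 s_i_le_0) // mulrAC ler_pdivlMr //.
exact: ler_pM (hs_nonneg last_lt_n) (ltW si0) s_last_le_k s_i_le_0.
Qed.

Lemma gamma_term_le e : 0 <= eta ->
  gamma ^+ (e + e) * eta ^+ 2 <= (delta ^+ e * eta) ^+ 2.
Proof.
move=> eta0; rewrite exprD [X in _ <= X]exprMn -expr2.
apply: ler_wpM2r; first exact: sqr_ge0.
have delta0 := le_trans gamma_ge0 gamma_le_delta.
by rewrite lerXn2r ?nnegrE ?exprn_ge0 ?lerXn2r ?nnegrE ?gamma_ge0 ?gamma_le_delta.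
Qed.

Lemma pinv_image_coord_head (j : 'I_m) : (j < k)%N -> y j 0 = (j == widen_ord hkm i)%:R.
Proof.
move=> hjk; have := lcols_trmx_mulmx hkm U (Phi *m (Phi1dag *m e_i)) (Ordinal hjk) 0.
rewrite !mulmxA (pinv_row_full_rank hrank1 hdag) mul1mx mxE eqxx andbT.
have -> : widen_ord hkm (Ordinal hjk) = j by apply: val_inj.
by move=> <-; congr (_%:R); rewrite -!val_eqE.
Qed.

Lemma pinv_image_coord_tail : \sum_(j < m | (k <= j)%N) y j 0 ^+ 2 <= eta ^+ 2.
Proof.
rewrite -dot_rcols_trmx -sqr_vnorm2 ler_sqr ?nnegrE ?vnorm2_ge0 ?snorm2_ge0 //.
rewrite !mulmxA; apply: vnorm2_mulmx_le_snorm2.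
by rewrite vnorm2_delta.
Qed.

Lemma scaled_pinv_image_tail_le e (P : pred 'I_m) (f : 'I_m -> R) :
  (forall j, P j -> (k <= j)%N) -> (forall j, P j -> `|f j| <= s k ^+ e) ->
  \sum_(j < m | P j) (f j * y j 0) ^+ 2 <= (s i ^+ e * (delta ^+ e * eta)) ^+ 2.
Proof.
move=> hPk hf; apply: le_trans (sum_sqr_mul_le (fun j => y j 0) hf) _.
rewrite mulrA -exprMn singular_value_mul_delta [X in _ <= X]exprMn.
apply: ler_wpM2l; first exact: sqr_ge0.
apply: le_trans pinv_image_coord_tail; rewrite [X in _ <= X](bigID P) /=.
rewrite [X in _ <= X + _](eq_bigl P) => [|j]; last first.
  by case: (boolP (P j)) => [/hPk ->|_]; rewrite ?andbF.
by rewrite lerDl sumr_ge0 // => j _; apply: sqr_ge0.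
Qed.

Lemma power_iter_image_Pbar : exists C, (A^T *m A) ^+ q *m A^T *m Phi = Pbar *m C.
Proof.
case/andP: hPbar_range => _ /submxP[D hD].
by exists D^T; rewrite -[LHS]trmxK hD trmx_mul trmxK.
Qed.

Lemma sin_angle_range_Q_le :
  sin_angle PiQ (col i (lcols hkm U))
    <= delta ^+ (2 * q + 2) * eta / Num.sqrt (1 + gamma ^+ (4 * q + 4) * eta ^+ 2).
Proof.
pose h j := if (j < n)%N then s j ^+ (2 * q + 2) else 0.
have [C hC] := power_iter_image_Pbar.
have [PiQ_sym PiQ_idem _] := hPiQ.
have eta0 := snorm2_ge0 ((rcols hkm U)^T *m Phi *m Phi1dag).
have hUd : U *m (diag_rect m m h *m y) = Q *m (Rm *m C *m (Phi1dag *m e_i)).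
  rewrite !mulmxA -(svd_power_iter_image hnm hU hV hSVD) -!mulmxA.
  by rewrite (mulmxA _ A^T) (mulmxA _ Phi) hC !mulmxA hQR.
rewrite col_lcols.
apply: (sin_angle_col_le (kk := k) (d := diag_rect m m h *m y) (a := s i ^+ (2 * q + 2))
  hU PiQ_sym PiQ_idem).
- by rewrite hUd orth_proj_mulmx_fix.
- exact: (ltn_ord i).
- exact: exprn_gt0 singular_value_gt0.
- rewrite diag_rect_mulmx_sq pinv_image_coord_head ?eqxx ?mulr1 /h /=; last exact: ltn_ord.
  by rewrite (ltn_trans _ hkn_lt).
- by move=> j /negbTE hj hjk; rewrite diag_rect_mulmx_sq pinv_image_coord_head // hj mulr0.
- by rewrite mulr_ge0 ?exprn_ge0 ?delta_ge0.
- by rewrite mulr_ge0 ?exprn_ge0 ?sqr_ge0 ?gamma_ge0.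
- by rewrite (_ : 4 * q + 4 = (2 * q + 2) + (2 * q + 2))%N ?gamma_term_le // addnACA -mulnDl.
rewrite (eq_bigr (fun j : 'I_m => (h j * y j 0) ^+ 2)) => [|j _]; last first.
  by rewrite diag_rect_mulmx_sq.
apply: scaled_pinv_image_tail_le => // j hkj; rewrite /h; case: ifP => hjn.
  exact: normr_singular_value_expr_le.
by rewrite normr0 exprn_ge0 // hs_nonneg.
Qed.

Lemma sin_angle_range_P_le :
  sin_angle PiP (col i (lcols hkn V))
    <= delta ^+ (2 * q + 1) * eta / Num.sqrt (1 + gamma ^+ (4 * q + 2) * eta ^+ 2).
Proof.
pose D := diag_rect n m (fun j => s j ^+ (2 * q + 1)).
have [C hC] := power_iter_image_Pbar.
have [PiP_sym PiP_idem _] := hPiP.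
have eta0 := snorm2_ge0 ((rcols hkm U)^T *m Phi *m Phi1dag).
have hd (j : 'I_n) : (D *m y) j 0 = s j ^+ (2 * q + 1) * y (widen_ord hnm j) 0.
  exact: diag_rect_mulmx.
have hVd : V *m (D *m y) = Pbar *m Pt *m (Pt^T *m C *m (Phi1dag *m e_i)).
  rewrite !mulmxA -(mulmxA Pbar) (mulmx1C hPt_on) mulmx1 -hC.
  by rewrite (svd_power_iter hnm hU hV hSVD).
have widen_eq (j : 'I_n) : (widen_ord hnm j == widen_ord hkm i) = (j == widen_ord hkn i).
  by rewrite -!val_eqE.
rewrite col_lcols.
apply: (sin_angle_col_le (kk := k) (d := D *m y) (a := s i ^+ (2 * q + 1))
  hV PiP_sym PiP_idem).
- by rewrite hVd orth_proj_mulmx_fix.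
- exact: (ltn_ord i).
- exact: exprn_gt0 singular_value_gt0.
- by rewrite hd pinv_image_coord_head ?widen_eq ?eqxx ?mulr1 //=; apply: ltn_ord.
- by move=> j /negbTE hj hjk; rewrite hd pinv_image_coord_head ?widen_eq ?hj ?mulr0.
- by rewrite mulr_ge0 ?exprn_ge0 ?delta_ge0.
- by rewrite mulr_ge0 ?exprn_ge0 ?sqr_ge0 ?gamma_ge0.
- by rewrite (_ : 4 * q + 2 = (2 * q + 1) + (2 * q + 1))%N ?gamma_term_le // addnACA -mulnDl.
have -> : \sum_(j < n | (k <= j)%N) (D *m y) j 0 ^+ 2 =
    \sum_(j < m | ((k <= j) && (j < n))%N) (s j ^+ (2 * q + 1) * y j 0) ^+ 2.
  by rewrite big_ord_narrow_cond; apply: eq_bigr => j _; rewrite hd.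
apply: scaled_pinv_image_tail_le => [j /andP[]//|j /andP[hkj hjn]].
exact: normr_singular_value_expr_le.
Qed.

End RandomizedQLPAngles.

Theorem theorem4 (R : realType) (m n k p q : nat)
  (hkm : (k <= m)%N) (hkn : (k <= n)%N)
  (hnm : (n <= m)%N) (hk1 : (1 <= k)%N) (hp1 : (1 <= p)%N) (hdn : (k + p < n)%N)
  (A : 'M[R]_(m, n)) (U : 'M[R]_m) (V : 'M[R]_n) (s : nat -> R)
  (hU : U^T *m U = 1%:M) (hV : V^T *m V = 1%:M)
  (hs_nonneg : forall j, (j < n)%N -> 0 <= s j)
  (hs_mono : forall j, (j.+1 < n)%N -> s j.+1 <= s j)
  (hsk : 0 < s k.-1)
  (hSVD : A = U *m diag_rect m n s *m V^T)
  (Phi : 'M[R]_(m, k + p))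
  (Pbar : 'M[R]_(n, k + p)) (Q : 'M[R]_(m, k + p)) (Rm : 'M[R]_(k + p))
  (Pt : 'M[R]_(k + p)) (Rt : 'M[R]_(k + p))
  (hrank : \rank ((A^T *m A) ^+ q *m A^T *m Phi) = (k + p)%N)
  (hPbar_on : Pbar^T *m Pbar = 1%:M)
  (hPbar_range : (Pbar^T == ((A^T *m A) ^+ q *m A^T *m Phi)^T)%MS)
  (hQR : A *m Pbar = Q *m Rm) (hQ_on : Q^T *m Q = 1%:M) (hR_up : upper_tri Rm)
  (hQR2 : Rm^T = Pt *m Rt) (hPt_on : Pt^T *m Pt = 1%:M) (hRt_up : upper_tri Rt)
  (Phi1dag : 'M[R]_(k + p, k))
  (hrank1 : \rank ((lcols hkm U)^T *m Phi) = k)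
  (hdag : is_pinv ((lcols hkm U)^T *m Phi) Phi1dag)
  (PiQ : 'M[R]_m) (PiP : 'M[R]_n)
  (hPiQ : is_orth_proj Q PiQ) (hPiP : is_orth_proj (Pbar *m Pt) PiP) :
  let eta := snorm2 ((rcols hkm U)^T *m Phi *m Phi1dag) in
  let gamma := s n.-1 / s 0%N in
  forall i : 'I_k,
    let delta := s k / s i in
    sin_angle PiQ (col i (lcols hkm U))
      <= delta ^+ (2 * q + 2) * eta
         / Num.sqrt (1 + gamma ^+ (4 * q + 4) * eta ^+ 2)
    /\
    sin_angle PiP (col i (lcols hkn V))
      <= delta ^+ (2 * q + 1) * eta
         / Num.sqrt (1 + gamma ^+ (4 * q + 2) * eta ^+ 2).
Proof.
move=> eta gamma i delta.
have hkn_lt : (k < n)%N by apply: leq_ltn_trans hdn; rewrite leq_addr.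
split.
- exact: (sin_angle_range_Q_le hnm hkn_lt hU hV hs_nonneg hs_mono hsk hSVD
           hPbar_range hQR hrank1 hdag hPiQ).
- exact: (sin_angle_range_P_le hkn hnm hkn_lt hU hV hs_nonneg hs_mono hsk hSVD
           hPbar_range hPt_on hrank1 hdag hPiP).
Qed.
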